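(* Let $k$ be a field. In the abelian category $\mathrm{Fun}^c(\mathbb R^n,\mathrm{Mod}_k)$ of upper semi-continuous persistence modules over $\mathbb R^n$ (componentwise order), the indecomposable injective objects are, up to isomorphism, exactly the indicator modules $k[D]$ where $D\subseteq\mathbb R^n$ is an upward-directed down-set open in the standard topology, and distinct such $D$ give non-isomorphic objects; thus they are in one-to-one correspondence with such down-sets.
   Context: In $\mathbb R^n$ with componentwise order, $x\ll y$ means $x_i<y_i$ for all $i$. A set is upward-directed if nonempty and any two elements have an upper bound in it. Persistence modules over $\mathbb R^n$ are functors from $\mathbb R^n$ (as a category, $p\to q$ iff $p\le q$) to $k$-vector spaces. $k[D]$ is the indicator module: $k$ on $D$, $0$ elsewhere, identity maps within $D$, zero otherwise. $\underline M_p=\varprojlim_{x\gg p}M_x$; $M$ is upper semi-continuous if the canonical morphism $M\to\underline M$ is an isomorphism; $\mathrm{Fun}^c(\mathbb R^n,\mathrm{Mod}_k)$ is the full subcategory of such modules (it is abelian, being equivalent to the category of sheaves on $\mathbb R^n$ with the Scott topology). *)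

From HB Require Import structures.
From mathcomp Require Import all_boot all_order all_algebra.
From mathcomp Require Import all_classical all_reals topology normedtype.
Set Implicit Arguments. Unset Strict Implicit. Unset Printing Implicit Defensive.
Import Order.TTheory GRing.Theory Num.Theory.
Import numFieldNormedType.Exports.
Local Open Scope classical_set_scope.
Local Open Scope ring_scope.

(* Points of R^n are row vectors 'rV[R]_n with the standard (product) topology. *)
Section PersistenceModules.
Variables (R : realType) (n : nat) (k : fieldType).

Local Notation pt := 'rV[R]_n.

Definition ple (x y : pt) : Prop := forall i, x ord0 i <= y ord0 i.
Definition pll (x y : pt) : Prop := forall i, x ord0 i < y ord0 i.

Definition updirected (D : set pt) : Prop :=
  (exists x, D x) /\
  forall x y, D x -> D y -> exists z, [/\ D z, ple x z & ple y z].
Definition downset (D : set pt) : Prop :=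
  forall x y, D x -> ple y x -> D y.

(* Data of a persistence module: a k-vector space at each point and maps
   pmap p q : M_p -> M_q (only the values for p <= q matter). *)
Record pmod := PMod {
  pV : pt -> lmodType k;
  pmap : forall p q : pt, pV p -> pV q }.
Arguments pmap : clear implicits.

Definition is_pmod (M : pmod) : Prop :=
  [/\ (forall p q, ple p q -> forall (a : k) (u v : pV M p),
          pmap M p q (a *: u + v) = a *: pmap M p q u + pmap M p q v),
      (forall p (v : pV M p), pmap M p p v = v) &
      (forall p q r, ple p q -> ple q r -> forall v : pV M p,
          pmap M p r v = pmap M q r (pmap M p q v))].

Definition hom (M N : pmod) := forall p, pV M p -> pV N p.

Definition is_hom (M N : pmod) (f : hom M N) : Prop :=
  (forall p (a : k) (u v : pV M p), f p (a *: u + v) = a *: f p u + f p v) /\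
  (forall p q, ple p q -> forall v : pV M p, f q (pmap M p q v) = pmap N p q (f p v)).

Definition hcomp (A B C : pmod) (g : hom B C) (f : hom A B) : hom A C :=
  fun p v => g p (f p v).
Definition hid (A : pmod) : hom A A := fun p v => v.
Definition hzero (A B : pmod) : hom A B := fun p _ => 0.
Definition hadd (A B : pmod) (f g : hom A B) : hom A B := fun p v => f p v + g p v.
Definition heq (A B : pmod) (f g : hom A B) : Prop := forall p v, f p v = g p v.

(* upper semi-continuity: the canonical map M_p -> lim_{x >> p} M_x is bijective,
   i.e. every compatible family (m_x)_{x >> p} comes from a unique m in M_p. *)
Definition usc (M : pmod) : Prop :=
  forall (p : pt) (m : forall x : pt, pV M x),
    (forall x y, pll p x -> ple x y -> pmap M x y (m x) = m y) ->
    (exists v : pV M p, forall x, pll p x -> pmap M p x v = m x) /\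
    (forall v w : pV M p,
       (forall x, pll p x -> pmap M p x v = m x) ->
       (forall x, pll p x -> pmap M p x w = m x) -> v = w).

Definition obj (M : pmod) : Prop := is_pmod M /\ usc M.

Definition is_zero (M : pmod) : Prop := forall p (v : pV M p), v = 0.

Definition mono (A B : pmod) (f : hom A B) : Prop :=
  forall (C : pmod) (g h : hom C A), obj C -> is_hom g -> is_hom h ->
    heq (hcomp f g) (hcomp f h) -> heq g h.

Definition injective_obj (I : pmod) : Prop :=
  forall (A B : pmod) (f : hom A B) (g : hom A I),
    obj A -> obj B -> is_hom f -> mono f -> is_hom g ->
    exists h : hom B I, is_hom h /\ heq (hcomp h f) g.

Definition biproduct (I A B : pmod) : Prop :=
  exists (i1 : hom A I) (i2 : hom B I) (p1 : hom I A) (p2 : hom I B),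
    [/\ is_hom i1, is_hom i2, is_hom p1 & is_hom p2] /\
    [/\ heq (hcomp p1 i1) (@hid A), heq (hcomp p2 i2) (@hid B),
        heq (hcomp p1 i2) (@hzero B A), heq (hcomp p2 i1) (@hzero A B) &
        heq (hadd (hcomp i1 p1) (hcomp i2 p2)) (@hid I)].

Definition indecomposable (I : pmod) : Prop :=
  ~ is_zero I /\
  forall A B : pmod, obj A -> obj B -> biproduct I A B -> is_zero A \/ is_zero B.

Definition iso (M N : pmod) : Prop :=
  exists (f : hom M N) (g : hom N M),
    [/\ is_hom f, is_hom g, heq (hcomp g f) (@hid M) & heq (hcomp f g) (@hid N)].

Definition indec_injective (M : pmod) : Prop :=
  [/\ obj M, injective_obj M & indecomposable M].

(* indicator module k[D]: k (as 'rV[k]_1) on D, 0 (as 'rV[k]_0) elsewhere;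
   the map is the identity between points of D and zero otherwise. *)
Definition indV (D : set pt) (p : pt) : lmodType k :=
  'rV[k]_(nat_of_bool (asbool (D p))).

Definition indicator (D : set pt) : pmod :=
  @PMod (indV D) (fun p q (v : indV D p) =>
     \row_(j < nat_of_bool (asbool (D q))) \sum_(i < nat_of_bool (asbool (D p))) v ord0 i).

End PersistenceModules.

(* An indicator module k[D] of an open, upward-directed down-set D is upper
   semi-continuous, and it is injective by a Zorn argument in the style of
   Baer: a maximal partial lift of a map into k[D] is total, because the
   directedness of D makes the value forced on one more vector well defined.
   Its endomorphisms are scalars, so it is indecomposable, and k[D] determines
   D as its support.
   Conversely, an indecomposable injective M is uniform: were two nonzero
   cyclic submodules <a>, <b> to meet trivially, take a maximal essential
   extension E of <a> and a maximal complement K of E containing <b>.  E + K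
   is closed, so injectivity extends the projection onto E to an endomorphism
   of M with image in E, a nontrivial idempotent.  Hence, for v <> 0 in M_p,
   the points q >= p where v survives form a directed set; its strict
   down-closure D is open, directed and down-closed, and the injectivity of M
   and of k[D] gives mutually inverse maps between M and k[D]. *)

From Pilot Require Import Defs.
From HB Require Import structures.
From mathcomp Require Import all_boot all_order all_algebra.
From mathcomp Require Import all_classical all_reals topology normedtype.
From mathcomp Require Import ring.
Set Implicit Arguments. Unset Strict Implicit. Unset Printing Implicit Defensive.
Import Order.TTheory GRing.Theory Num.Theory.
Import numFieldNormedType.Exports.
Local Open Scope classical_set_scope.
Local Open Scope ring_scope.

Notation pm M p q := (@Defs.pmap _ _ _ M p q).

Section RowSum.
Variable k : fieldType.

(* The fibres of an indicator module are 'rV[k]_b with b : bool; [row_sum]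
   reads off the coordinate (0 when b = false). *)
Definition row_sum (b : nat) (v : 'rV[k]_b) : k := \sum_(i < b) v ord0 i.

Lemma const_row_sum (b : bool) (v : 'rV[k]_b) : const_mx (row_sum v) = v.
Proof.
case: b v => v; last by apply/rowP => -[].
apply/rowP => j; rewrite mxE /row_sum big_ord1 (ord1 j).
by congr (v _ _); apply: val_inj.
Qed.

Lemma row_sum_const (b : bool) (c : k) :
  row_sum (const_mx c : 'rV[k]_b) = if b then c else 0.
Proof. by case: b; rewrite /row_sum ?big_ord1 ?big_ord0 // mxE. Qed.

Lemma row_sum_constT (b : bool) (c : k) : b -> row_sum (const_mx c : 'rV[k]_b) = c.
Proof. by move=> hb; rewrite row_sum_const hb. Qed.

Lemma row_sumF (b : bool) (v : 'rV[k]_b) : b = false -> row_sum v = 0.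
Proof. by move: v; case: b => // v _; apply: big_ord0. Qed.

Lemma rowF_eq (b : bool) (u v : 'rV[k]_b) : b = false -> u = v.
Proof. by move: u v; case: b => // u v _; apply/rowP => -[]. Qed.

Lemma row_sum_lin (b : nat) (a : k) (u v : 'rV[k]_b) :
  row_sum (a *: u + v) = a * row_sum u + row_sum v.
Proof. by rewrite /row_sum mulr_sumr -big_split; apply: eq_bigr => i _; rewrite !mxE. Qed.

Lemma row_sum0 (b : nat) : row_sum (0 : 'rV[k]_b) = 0.
Proof. by rewrite /row_sum big1 // => i _; rewrite mxE. Qed.

Lemma const_mx_lin (b : nat) (a c d : k) :
  const_mx (a * c + d) = a *: (const_mx c : 'rV[k]_b) + const_mx d.
Proof. by apply/rowP => j; rewrite !mxE. Qed.

Lemma const_mx_scale (b : nat) (c : k) : const_mx c = c *: (const_mx 1 : 'rV[k]_b).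
Proof. by apply/rowP => j; rewrite !mxE mulr1. Qed.

Lemma row_sum_inj (b : bool) (u v : 'rV[k]_b) : row_sum u = row_sum v -> u = v.
Proof. by move=> h; rewrite -(const_row_sum u) -(const_row_sum v) h. Qed.
End RowSum.

Section LinearFacts.
Variables (k : fieldType) (V W : lmodType k) (f : V -> W).
Hypothesis fL : forall a u v, f (a *: u + v) = a *: f u + f v.
Let lf : {linear V -> W} := HB.pack f (GRing.isLinear.Build k V W *:%R f fL).

Lemma lin0 : f 0 = 0. Proof. exact: linear0 lf. Qed.
Lemma linD u v : f (u + v) = f u + f v. Proof. exact: raddfD lf u v. Qed.
Lemma linZ a u : f (a *: u) = a *: f u. Proof. exact: linearZZ lf a u. Qed.
Lemma linB u v : f (u - v) = f u - f v. Proof. exact: raddfB lf u v. Qed.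
End LinearFacts.

Section Points.
Variables (R : realType) (n : nat).
Local Notation pt := 'rV[R]_n.
Implicit Types x y z p : pt.

Definition pmin x y : pt := \row_i Num.min (x ord0 i) (y ord0 i).
Definition pmax x y : pt := \row_i Num.max (x ord0 i) (y ord0 i).
Definition shift x (c : R) : pt := \row_i (x ord0 i + c).

Lemma ple_refl x : ple x x. Proof. by []. Qed.
Lemma ple_trans x y z : ple x y -> ple y z -> ple x z.
Proof. by move=> h1 h2 i; apply: le_trans (h1 i) (h2 i). Qed.
Lemma pll_ple x y : pll x y -> ple x y.
Proof. by move=> h i; apply: ltW. Qed.
Lemma ple_pll_trans x y z : ple x y -> pll y z -> pll x z.
Proof. by move=> h1 h2 i; apply: le_lt_trans (h1 i) (h2 i). Qed.
Lemma pll_shift x c : 0 < c -> pll x (shift x c).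
Proof. by move=> c0 i; rewrite mxE ltrDl. Qed.
Lemma pmin_l x y : ple (pmin x y) x.
Proof. by move=> i; rewrite mxE ge_min lexx. Qed.
Lemma pmin_r x y : ple (pmin x y) y.
Proof. by move=> i; rewrite mxE ge_min lexx orbT. Qed.
Lemma pll_pmin p x y : pll p x -> pll p y -> pll p (pmin x y).
Proof. by move=> h1 h2 i; rewrite mxE lt_min h1 h2. Qed.
Lemma pmax_l x y : ple x (pmax x y).
Proof. by move=> i; rewrite mxE le_max lexx. Qed.
Lemma pmax_r x y : ple y (pmax x y).
Proof. by move=> i; rewrite mxE le_max lexx orbT. Qed.

Lemma not_ple p q : ~ ple p q -> exists i, q ord0 i < p ord0 i.
Proof.
move=> h; apply: contrapT => h2; apply: h => i.
by rewrite leNgt; apply/negP => hi; apply: h2; exists i.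
Qed.

Lemma open_shift (D : set pt) x : open D -> D x -> exists2 e : R, 0 < e & D (shift x e).
Proof.
move=> oD Dx; have /nbhs_ballP [e e0 De] := oD x Dx.
have e20 : 0 < e / 2 by rewrite divr_gt0.
have e2e : e / 2 < e by rewrite ltr_pdivrMr // ltr_pMr // ltr1n.
exists (e / 2) => //; apply: De; split => // i j.
by rewrite (ord1 i) /ball /= mxE opprD addrA subrr add0r normrN gtr0_norm.
Qed.

Lemma open_pll x : open [set y | pll y x].
Proof.
rewrite openE => y /= yx; apply/nbhs_ballP.
exists (\big[Order.min/1]_(i < n) (x ord0 i - y ord0 i)).
  apply: (big_ind (fun v => 0 < v)) => // [a b ha hb|i _]; first by rewrite lt_min ha hb.
  by rewrite subr_gt0.
move=> z [_ hz] i; have := lt_le_trans (hz ord0 i) (bigmin_le _ i _).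
by rewrite /ball /= ltr_distlC => /andP[_]; rewrite addrC subrK.
Qed.
End Points.

Section IndicatorObjects.
Variables (R : realType) (n : nat) (k : fieldType).
Local Notation pt := 'rV[R]_n.
Implicit Types (p q : pt) (S D : set pt).

Lemma indicator_pmapE S p q (v : pV (indicator k S) p) :
  pm (indicator k S) p q v = const_mx (row_sum v).
Proof. by apply/rowP => j; rewrite !mxE. Qed.

Definition order_convex S := forall p q r, ple p q -> ple q r -> S p -> S r -> S q.

(* The last two hypotheses make k[S]_x constant for x >> q close to q, which
   is upper semi-continuity at q. *)
Lemma indicator_obj S : order_convex S ->
  (forall q, S q -> exists2 x, pll q x & S x) ->
  (forall q, ~ S q -> exists2 x', pll q x' & forall y, pll q y -> ple y x' -> ~ S y) ->
  obj (indicator k S).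
Proof.
move=> cS Sin Sout; split.
  split=> [p q _ a u v|p v|p q r hpq hqr v]; rewrite !indicator_pmapE.
  - by rewrite row_sum_lin const_mx_lin.
  - exact: const_row_sum.
  rewrite row_sum_const.
  have [Sq|nSq] := pselect (S q); first by rewrite (asboolT Sq).
  have [Sp|nSp] := pselect (S p); last by rewrite (row_sumF v (asboolF nSp)) if_same.
  have [Sr|nSr] := pselect (S r); first by case: nSq; apply: cS hpq hqr Sp Sr.
  exact/rowF_eq/asboolF.
move=> p m hm; have [Sp|nSp] := pselect (S p).
  have [x0 px0 Sx0] := Sin p Sp.
  have mE x : pll p x -> m x = const_mx (row_sum (m x0)).
    move=> px; have py := pll_pmin px px0.
    have Sy : S (pmin x x0) by apply: cS (pll_ple py) (pmin_r _ _) Sp Sx0.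
    rewrite -(hm _ _ py (pmin_l x x0)) -(hm _ _ py (pmin_r x x0)) !indicator_pmapE.
    by rewrite row_sum_const (asboolT Sx0).
  split.
    exists (const_mx (row_sum (m x0))) => x px.
    by rewrite indicator_pmapE row_sum_constT ?(asboolT Sp) // (mE x px).
  move=> v w hv hw; apply: row_sum_inj; have := hv _ px0.
  rewrite -(hw _ px0) !indicator_pmapE => /(congr1 (@row_sum _ _)).
  by rewrite !row_sum_constT ?(asboolT Sx0).
have [x' px' nSx'] := Sout p nSp.
have m0 x : pll p x -> m x = 0.
  move=> px; have py := pll_pmin px px'.
  have nSy : ~ S (pmin x x') by apply: nSx' (pmin_r _ _).
  by rewrite -(hm _ _ py (pmin_l x x')) indicator_pmapE (row_sumF _ (asboolF nSy)).
split; last by move=> v w _ _; apply/rowF_eq/asboolF.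
by exists 0 => x px; rewrite indicator_pmapE row_sum0 m0 //; apply/rowP => j; rewrite !mxE.
Qed.

Lemma indicator_downset_obj D : open D -> downset D -> obj (indicator k D).
Proof.
move=> oD dD; apply: indicator_obj.
- by move=> a b c hab hbc _ Dc; apply: dD Dc hbc.
- by move=> q Dq; have [e e0 De] := open_shift oD Dq; exists (shift q e) => //; apply: pll_shift.
move=> q nDq; exists (shift q 1); first exact: pll_shift.
by move=> y hy _ Dy; apply: nDq; apply: dD Dy (pll_ple hy).
Qed.

Lemma indicator_upcap_obj p D : open D -> downset D ->
  obj (indicator k [set q | ple p q /\ D q]).
Proof.
move=> oD dD; apply: indicator_obj.
- move=> a b c hab hbc [hpa _] [_ Dc].
  by split; [apply: ple_trans hpa hab|apply: dD Dc hbc].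
- move=> q [hpq Dq]; have [e e0 De] := open_shift oD Dq.
  exists (shift q e); first exact: pll_shift.
  by split => //; apply: ple_trans hpq (pll_ple (pll_shift q e0)).
move=> q nSq; have [hpq|/not_ple [i hi]] := pselect (ple p q).
  exists (shift q 1); first exact: pll_shift.
  by move=> y hy _ [_ Dy]; apply: nSq; split => //; apply: dD Dy (pll_ple hy).
(* Coordinate i of the box ]q, x'] stays below the midpoint of q_i < p_i. *)
have [hmi him] := midf_lt hi.
exists (\row_j (if j == i then (q ord0 i + p ord0 i) / 2 else q ord0 j + 1)).
  by move=> j; rewrite mxE; case: eqP => [->|_]; rewrite ?ltrDl.
move=> y _ hy [hpy _]; have := le_trans (hpy i) (hy i).
by rewrite mxE eqxx leNgt him.
Qed.
End IndicatorObjects.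

Section Homomorphisms.
Variables (R : realType) (n : nat) (k : fieldType).
Local Notation pt := 'rV[R]_n.
Local Notation pmod := (pmod R n k).

Lemma hcomp_hom (A B C : pmod) (g : Defs.hom B C) (f : Defs.hom A B) :
  is_hom f -> is_hom g -> is_hom (hcomp g f).
Proof.
move=> [fl fn] [gl gn]; split=> [p a u v|p q hpq v]; first by rewrite /hcomp fl gl.
by rewrite /hcomp fn // gn.
Qed.

Lemma mono_of_inj (A B : pmod) (f : Defs.hom A B) :
  (forall p u w, f p u = f p w -> u = w) -> mono f.
Proof. by move=> hi C g h _ _ _ e p v; apply: hi; apply: e. Qed.

(* A vector v in the kernel of f at p is the image of 1 under the morphism
   k[{q | p <= q}] -> A generated by v; monicity then forces v = 0. *)
Lemma inj_of_mono (A B : pmod) (f : Defs.hom A B) : is_pmod A -> is_pmod B ->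
  is_hom f -> mono f -> forall p u w, f p u = f p w -> u = w.
Proof.
move=> [Al Aid Acomp] [Bl _ _] [fl fn] fmono p u w e.
have fv : f p (u - w) = 0 by rewrite (linB (fl p)) e subrr.
apply/eqP; rewrite -subr_eq0; apply/eqP; move: (u - w) fv => v fv.
pose S := [set q : pt | ple p q /\ setT q].
have Sp : S p by split; first exact: ple_refl.
pose g : Defs.hom (indicator k S) A := fun q c => row_sum c *: pm A p q v.
have ghom : is_hom g.
  split=> [q a c d|q r hqr c]; first by rewrite /g row_sum_lin scalerDl scalerA.
  rewrite /g indicator_pmapE row_sum_const.
  have [[hpq _]|nSq] := pselect (S q); last first.
    by rewrite (row_sumF c (asboolF nSq)) if_same !scale0r (lin0 (Al _ _ hqr)).
  by rewrite (asboolT (conj (ple_trans hpq hqr) I)) (linZ (Al _ _ hqr)) -Acomp.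
have zero_hom : is_hom (@hzero _ _ _ (indicator k S) A).
  by split=> [q a c d|q r hqr c]; rewrite /hzero ?scaler0 ?addr0 // (lin0 (Al _ _ hqr)).
have := fmono _ g _ (indicator_upcap_obj k p openT (fun _ _ _ _ => I)) ghom zero_hom.
move=> /(_ _ p (const_mx 1)); rewrite /g /hzero row_sum_constT ?(asboolT Sp) // scale1r Aid.
apply=> q c; rewrite /hcomp /g /hzero.
have [[hpq _]|nSq] := pselect (S q); last by rewrite (row_sumF c (asboolF nSq)) scale0r.
by rewrite (linZ (fl q)) fn // fv (lin0 (Bl _ _ hpq)) scaler0 (lin0 (fl q)).
Qed.

Definition idempotent_trivial (M : pmod) := forall e : Defs.hom M M, is_hom e ->
  heq (hcomp e e) e -> heq e (@hzero _ _ _ M M) \/ heq e (@hid _ _ _ M).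

Lemma indecomposable_of_idempotent_trivial (M : pmod) :
  ~ is_zero M -> idempotent_trivial M -> indecomposable M.
Proof.
move=> nz idM; split => // A B _ _ [i1 [i2 [p1 [p2 [[hi1 hi2 hp1 hp2] [e11 e22 e12 e21 esum]]]]]].
have ES p (w : pV M p) : i1 p (p1 p w) + i2 p (p2 p w) = w := esum p w.
have [e0|e1] := idM _ (hcomp_hom hp1 hi1) (fun p x => congr1 (i1 p) (e11 p (p1 p x))).
  left => p a; have i1a : i1 p a = 0.
    have := ES p (i1 p a); rewrite [i1 p (p1 p _)]e0 add0r [p2 p _]e21.
    by rewrite (lin0 (hi2.1 p)) => <-.
  by rewrite -[a]e11 /hcomp i1a (lin0 (hp1.1 p)).
right => p b; have i2b : i2 p b = 0.
  have := ES p (i2 p b); rewrite [i1 p (p1 p _)]e1 [p2 p _]e22.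
  by move=> /(congr1 (fun t => t - i2 p b)); rewrite addrK subrr.
by rewrite -[b]e22 /hcomp i2b (lin0 (hp2.1 p)).
Qed.
End Homomorphisms.

Section IndicatorEndomorphisms.
Variables (R : realType) (n : nat) (k : fieldType).
Local Notation pt := 'rV[R]_n.

(* Directedness of D glues the pointwise scalars of an endomorphism into one. *)
Lemma indicator_endo_scalar (D : set pt) (e : Defs.hom (indicator k D) (indicator k D)) :
  updirected D -> is_hom e ->
  exists c : k, forall p (v : pV (indicator k D) p), e p v = c *: v.
Proof.
move=> [[x0 Dx0] dir] [el en].
pose c p := row_sum (e p (const_mx 1)).
have eE p (v : pV (indicator k D) p) : e p v = (c p * row_sum v) *: const_mx 1.
  rewrite -{1}(const_row_sum v) const_mx_scale (linZ (el p)).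
  by rewrite -(const_row_sum (e p _)) -/(c p) const_mx_scale scalerA mulrC.
have c_const p z : D p -> D z -> ple p z -> c p = c z.
  move=> Dp Dz hpz; have := congr1 (@row_sum _ _) (en p z hpz (const_mx 1)).
  by rewrite !indicator_pmapE !row_sum_constT ?(asboolT Dp) ?(asboolT Dz).
exists (c x0) => p v; have [Dp|nDp] := pselect (D p); last exact/rowF_eq/asboolF.
have [z [Dz hpz hxz]] := dir p x0 Dp Dx0.
rewrite eE (c_const _ _ Dp Dz hpz) -(c_const _ _ Dx0 Dz hxz) -scalerA -const_mx_scale.
by rewrite const_row_sum.
Qed.

Lemma indicator_indecomposable (D : set pt) :
  updirected D -> indecomposable (indicator k D).
Proof.
move=> uD; have [[x0 Dx0] _] := uD.
have one0 : const_mx 1 != 0 :> pV (indicator k D) x0.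
  apply/eqP => /(congr1 (@row_sum _ _)) /eqP.
  by rewrite row_sum0 row_sum_constT ?(asboolT Dx0) // oner_eq0.
apply: indecomposable_of_idempotent_trivial => [z|e he ee].
  by move: one0; rewrite (z x0 (const_mx 1)) eqxx.
have [c hc] := indicator_endo_scalar uD he.
have cc : c * c = c.
  have := ee x0 (const_mx 1); rewrite /hcomp !hc scalerA -!const_mx_scale.
  by move=> /(congr1 (@row_sum _ _)); rewrite !row_sum_constT ?(asboolT Dx0).
have /eqP : c * (c - 1) = 0 by rewrite mulrBr mulr1 cc subrr.
rewrite mulf_eq0 subr_eq0 => /orP[] /eqP c01; [left|right] => p v.
  by rewrite hc c01 scale0r.
by rewrite hc c01 scale1r.
Qed.

Lemma indicator_iso_support (D1 D2 : set pt) :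
  iso (indicator k D1) (indicator k D2) -> D1 `<=` D2.
Proof.
move=> [f [g [hf hg gf fg]]] p D1p; apply: contrapT => nD2.
have f1 : f p (const_mx 1) = 0 by apply/rowF_eq/asboolF.
have := gf p (const_mx 1); rewrite /hcomp f1 (lin0 (hg.1 p)) /hid.
move=> /(congr1 (@row_sum _ _)); rewrite row_sum0 row_sum_constT ?(asboolT D1p) //.
by move=> /eqP; rewrite eq_sym oner_eq0.
Qed.

Lemma indicator_iso_eq (D1 D2 : set pt) :
  iso (indicator k D1) (indicator k D2) -> D1 = D2.
Proof.
move=> h; apply/seteqP; split; first exact: indicator_iso_support.
by case: h => [f [g [hf hg gf fg]]]; apply: indicator_iso_support; exists g, f.
Qed.
End IndicatorEndomorphisms.

Section ZornFamilies.
Variables (X : Type) (F : X -> Type).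

Definition fam := forall x, set (F x).
Definition fsub (L1 L2 : fam) := forall x u, L1 x u -> L2 x u.
Definition funion (C : set fam) : fam := fun x u => exists2 L, C L & L x u.

Lemma fsub_funion (C : set fam) L : C L -> fsub L (funion C).
Proof. by move=> CL x u Lu; exists L. Qed.

Lemma zorn_fam (P : fam -> Prop) (L0 : fam) : P L0 ->
  (forall C : set fam, C `<=` P -> (exists L, C L) ->
     (forall L1 L2, C L1 -> C L2 -> fsub L1 L2 \/ fsub L2 L1) -> P (funion C)) ->
  exists2 E, P E & forall L, P L -> fsub E L -> fsub L E.
Proof.
move=> P0 hC; pose T := {L : fam | P L}.
pose le (s t : T) : bool := `[< fsub (sval s) (sval t) >].
have [||C totC|m hm] := @ZL_preorder T (exist _ L0 P0) le.
- by move=> s; apply/asboolP.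
- by move=> r s t /asboolP h1 /asboolP h2; apply/asboolP => x u /h1 /h2.
- have [[s0 Cs0]|nC] := pselect (exists s, C s); last first.
    by exists (exist _ L0 P0) => s Cs; case: nC; exists s.
  have PU : P (funion [set sval s | s in C]).
    apply: hC; first by move=> _ [s _ <-]; apply: svalP.
      by exists (sval s0), s0.
    move=> _ _ [s1 C1 <-] [s2 C2 <-].
    by have [/asboolP h|/asboolP h] := totC s1 s2 C1 C2; [left|right].
  by exists (exist _ _ PU) => s Cs; apply/asboolP; apply: fsub_funion; exists s.
exists (sval m); first exact: svalP.
by move=> L PL hsub; have /asboolP := hm (exist _ L PL) (asboolT hsub).
Qed.
End ZornFamilies.
Arguments funion {X F} C _ _.

Section IndicatorInjective.
Variables (R : realType) (n : nat) (k : fieldType).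
Local Notation pt := 'rV[R]_n.
Variables (D : set pt) (dD : downset D) (uD : updirected D).
Variables (A B : pmod R n k) (pB : is_pmod B).
Variables (f : Defs.hom A B) (g : Defs.hom A (indicator k D)).
Arguments f : clear implicits. Arguments g : clear implicits.
Hypotheses (hf : is_hom f) (hg : is_hom g) (f_inj : forall p u w, f p u = f p w -> u = w).

Let gc p (a : pV A p) : k := row_sum (g p a).

Let gc_lin p c (u v : pV A p) : gc (c *: u + v) = c * gc u + gc v.
Proof. by rewrite /gc hg.1 row_sum_lin. Qed.

Let gc_pmap p q (a : pV A p) : D q -> ple p q -> gc (pm A p q a) = gc a.
Proof. by move=> Dq hpq; rewrite /gc hg.2 // indicator_pmapE row_sum_constT ?(asboolT Dq). Qed.

(* A partial lift of g along f, given by its graph: G p (u, c) says u |-> c in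
   k = k[D]_p.  The conditions are only imposed over D, where k[D] lives. *)
Definition lift_graph := fam (fun p : pt => (pV B p * k)%type).

Definition partial_lift (G : lift_graph) :=
  [/\ forall p u c c', D p -> G p (u, c) -> G p (u, c') -> c = c',
      forall p a u v c d, D p -> G p (u, c) -> G p (v, d) -> G p (a *: u + v, a * c + d),
      forall p a, D p -> G p (f p a, gc a) &
      forall p q u c, D q -> ple p q -> G p (u, c) -> G q (pm B p q u, c)].

Definition graph_of_g : lift_graph := fun p uc => D p /\ exists a, uc = (f p a, gc a).

Lemma partial_lift_graph_of_g : partial_lift graph_of_g.
Proof.
split.
- by move=> p u c c' _ [_ [a [-> ->]]] [_ [a' [/f_inj <- ->]]].
- move=> p a u v c d Dp [_ [a1 [-> ->]]] [_ [a2 [-> ->]]].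
  by split => //; exists (a *: a1 + a2); rewrite hf.1 gc_lin.
- by move=> p a Dp; split => //; exists a.
move=> p q u c Dq hpq [_ [a [-> ->]]]; split => //.
by exists (pm A p q a); rewrite hf.2 // gc_pmap.
Qed.

Lemma partial_lift_funion (C : set lift_graph) : C `<=` partial_lift ->
  (exists G, C G) -> (forall G1 G2, C G1 -> C G2 -> fsub G1 G2 \/ fsub G2 G1) ->
  partial_lift (funion C).
Proof.
move=> CP [G0 CG0] tot.
have both p uc vd G1 G2 : C G1 -> C G2 -> G1 p uc -> G2 p vd ->
    exists2 G, C G & G p uc /\ G p vd.
  move=> C1 C2 h1 h2; have [s|s] := tot _ _ C1 C2.
    by exists G2 => //; split => //; apply: s.
  by exists G1 => //; split => //; apply: s.
split.
- move=> p u c c' Dp [G1 C1 h1] [G2 C2 h2].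
  have [G CG [h h']] := both _ _ _ _ _ C1 C2 h1 h2.
  by have [fn _ _ _] := CP _ CG; apply: fn h h'.
- move=> p a u v c d Dp [G1 C1 h1] [G2 C2 h2].
  have [G CG [h h']] := both _ _ _ _ _ C1 C2 h1 h2.
  by exists G => //; have [_ lin _ _] := CP _ CG; apply: lin.
- by move=> p a Dp; exists G0 => //; have [_ _ ext _] := CP _ CG0; apply: ext.
move=> p q u c Dq hpq [G CG h]; exists G => //.
by have [_ _ _ nat] := CP _ CG; apply: nat.
Qed.

Section OneStepExtension.
Variables (G : lift_graph) (hG : partial_lift G) (p : pt) (Dp : D p) (b : pV B p).
Arguments G : clear implicits.

Let bq q : pV B q := pm B p q b.

Let bq_pmap q r : ple p q -> ple q r -> pm B q r (bq q) = bq r.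
Proof. by move=> h1 h2; have [_ _ Bc] := pB; rewrite /bq -Bc. Qed.

Let G_zero q : D q -> G q (0, 0).
Proof.
move=> Dq; have [_ _ ext _] := hG; have := ext q 0 Dq.
by rewrite (lin0 (hf.1 q)) /gc (lin0 (hg.1 q)) row_sum0.
Qed.

Let G_scale q a w d : D q -> G q (w, d) -> G q (a *: w, a * d).
Proof.
move=> Dq Gw; have [_ lin _ _] := hG.
by have := lin q a w 0 d 0 Dq Gw (G_zero Dq); rewrite !addr0.
Qed.

Let G_sub q w w' d d' : D q -> G q (w, d) -> G q (w', d') -> G q (w - w', d - d').
Proof.
move=> Dq Gw Gw'; have [_ lin _ _] := hG.
by have := lin q (-1) w' w d' d Dq Gw' Gw; rewrite scaleN1r mulN1r addrC [- d' + _]addrC.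
Qed.

Definition forced_value : k :=
  if pselect (exists qc : pt * k, [/\ D qc.1, ple p qc.1 & G qc.1 (bq qc.1, qc.2)]) is left h
  then (projT1 (cid h)).2 else 0.

(* Two values forced on b above p agree at a common upper bound in D. *)
Lemma forced_valueE q c : D q -> ple p q -> G q (bq q, c) -> c = forced_value.
Proof.
move=> Dq hpq Gq; rewrite /forced_value; case: pselect => [h|[]]; last by exists (q, c).
case: (cid h) => -[q' c'] /= [Dq' hpq' Gq'].
have [_ dir] := uD; have [z [Dz hqz hq'z]] := dir q q' Dq Dq'.
have [fn _ _ nat] := hG.
have Gz x cx : ple p x -> ple x z -> G x (bq x, cx) -> G z (bq z, cx).
  by move=> h1 h2 Gx; rewrite -(bq_pmap h1 h2); apply: nat.
exact: fn Dz (Gz _ _ hpq hqz Gq) (Gz _ _ hpq' hq'z Gq').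
Qed.

(* Adjoin b over the points q >= p of D, sending it to the forced value. *)
Definition ext_graph : lift_graph := fun q uc => exists w d e,
  [/\ G q (w, d), e = 0 \/ (D q /\ ple p q) & uc = (w + e *: bq q, d + e * forced_value)].

Arguments ext_graph : clear implicits.

Lemma fsub_ext_graph : fsub G ext_graph.
Proof.
move=> q [u c] Gu; exists u, c, 0; split; [by []|by left|].
by rewrite scale0r mul0r !addr0.
Qed.

Lemma ext_graph_b : ext_graph p (b, forced_value).
Proof.
exists 0, 0, 1; split; [exact: G_zero|by right; split; last exact: ple_refl|].
by have [_ Bid _] := pB; rewrite /bq Bid scale1r mul1r !add0r.
Qed.

Lemma partial_lift_ext_graph : partial_lift ext_graph.
Proof.
have [fn lin ext nat] := hG; have [Bl _ _] := pB; split.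
- move=> q u c c' Dq [w [d [e [Gw he [-> ->]]]]] [w' [d' [e' [Gw' he' [eu ->]]]]].
  have [ee'|ne] := eqVneq e e'.
    by move: eu; rewrite -ee' => /addIr eww; rewrite eww in Gw; rewrite (fn _ _ _ _ Dq Gw Gw').
  have hpq : ple p q.
    by case: he he' => [e0|[]//] [e0'|[]//]; move: ne; rewrite e0 e0' eqxx.
  have ewb : w - w' = (e' - e) *: bq q.
    by apply/eqP; rewrite scalerBl subr_eq addrC addrA -eu addrK.
  have nz : e' - e != 0 by rewrite subr_eq0 eq_sym.
  (* distinct coefficients put b_q in the domain of G, where its value is forced *)
  have Gb : G q (bq q, (e' - e)^-1 * (d - d')).
    by rewrite -[bq q](scalerK nz) -ewb; apply: G_scale => //; apply: G_sub.
  by rewrite -(forced_valueE Dq hpq Gb); field.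
- move=> q a u v c d Dq [w1 [d1 [e1 [G1 h1 [-> ->]]]]] [w2 [d2 [e2 [G2 h2 [-> ->]]]]].
  exists (a *: w1 + w2), (a * d1 + d2), (a * e1 + e2); split; first exact: lin.
    case: h1 => [->|?]; last by right.
    by case: h2 => [->|?]; [left; rewrite mulr0 addr0|right].
  by congr pair; [rewrite scalerDr scalerA scalerDl addrACA|ring].
- by move=> q a Dq; apply: fsub_ext_graph; apply: ext.
move=> q r u c Dr hqr [w [d [e [Gw he [-> ->]]]]].
exists (pm B q r w), d, e; have Gr := nat _ _ _ _ Dr hqr Gw.
case: he => [e0|[_ hpq]].
  by split=> //; [left|rewrite e0 !scale0r !addr0].
split=> //; first by right; split => //; apply: ple_trans hpq hqr.
by rewrite (linD (Bl _ _ hqr)) (linZ (Bl _ _ hqr)) bq_pmap.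
Qed.
End OneStepExtension.

Lemma maximal_lift_total (G : lift_graph) : partial_lift G ->
  (forall L, partial_lift L -> fsub G L -> fsub L G) ->
  forall p, D p -> forall b : pV B p, exists c, G p (b, c).
Proof.
move=> hG Gmax p Dp b; exists (forced_value G b).
exact: Gmax _ (partial_lift_ext_graph hG b) (fsub_ext_graph b) _ _ (ext_graph_b hG Dp b).
Qed.

Lemma indicator_lift :
  exists h : Defs.hom B (indicator k D), is_hom h /\ heq (hcomp h f) g.
Proof.
have [G hG Gmax] := zorn_fam partial_lift_graph_of_g partial_lift_funion.
have [fn lin ext nat] := hG; have total := maximal_lift_total hG Gmax.
pose val p u : k := if pselect (exists c, G p (u, c)) is left h then projT1 (cid h) else 0.
have valP p u : D p -> G p (u, val p u).
  by move=> Dp; rewrite /val; case: pselect => [h|[]]; [exact: projT2 (cid h)|exact: total].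
have valE p u c : D p -> G p (u, c) -> val p u = c.
  by move=> Dp; apply: fn Dp (valP _ _ Dp).
exists (fun p u => const_mx (val p u)); split; first split.
- move=> p a u v; have [Dp|nDp] := pselect (D p); last exact/rowF_eq/asboolF.
  by rewrite (valE _ _ _ Dp (lin _ _ _ _ _ _ Dp (valP _ u Dp) (valP _ v Dp))) const_mx_lin.
- move=> p q hpq u; have [Dq|nDq] := pselect (D q); last exact/rowF_eq/asboolF.
  have Dp := dD Dq hpq.
  rewrite indicator_pmapE row_sum_constT ?(asboolT Dp) //.
  by rewrite (valE _ _ _ Dq (nat _ _ _ _ Dq hpq (valP _ u Dp))).
move=> p a; rewrite /hcomp; have [Dp|nDp] := pselect (D p); last exact/rowF_eq/asboolF.
by rewrite (valE _ _ _ Dp (ext _ _ Dp)) const_row_sum.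
Qed.
End IndicatorInjective.

Lemma indicator_injective (R : realType) (n : nat) (k : fieldType) (D : set 'rV[R]_n) :
  downset D -> updirected D -> injective_obj (indicator k D).
Proof.
move=> dD uD A B f g oA oB hf mf hg.
apply: (indicator_lift dD uD oB.1 hf hg); exact: inj_of_mono oA.1 oB.1 hf mf.
Qed.

Section USCFacts.
Variables (R : realType) (n : nat) (k : fieldType).
Variables (M : pmod R n k) (pM : is_pmod M) (uM : usc M).
Arguments uM : clear implicits.

Lemma usc_eq p (u v : pV M p) : (forall x, pll p x -> pm M p x u = pm M p x v) -> u = v.
Proof.
have [_ _ Mc] := pM; move=> h.
have hm x y : pll p x -> ple x y -> pm M x y (pm M p x v) = pm M p y v.
  by move=> px hxy; rewrite -Mc //; apply: pll_ple.
by have [_ uniq] := uM p _ hm; apply: uniq => x px //; rewrite h.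
Qed.

Lemma usc_nz p (v : pV M p) : v != 0 -> exists2 x, pll p x & pm M p x v != 0.
Proof.
move=> nz; apply: contrapT => h; move/eqP: nz; apply; apply: usc_eq => x px.
have [Ml _ _] := pM; rewrite (lin0 (Ml _ _ (pll_ple px))).
by apply: contrapT => /eqP h2; apply: h; exists x.
Qed.
End USCFacts.

Section SubLmodule.
Variables (k : fieldType) (V : lmodType k) (S : set V).
Hypotheses (S0 : S 0) (SL : forall a u v, S u -> S v -> S (a *: u + v)).

Definition subspace_pred : {pred V} := fun x => `[< S x >].

Lemma subspace_pred_closed : subsemimod_closed subspace_pred.
Proof.
have SD u v : S u -> S v -> S (u + v) by move=> Su Sv; rewrite -[u]scale1r; apply: SL.
split; first split; first exact/asboolP.
  by move=> u v /asboolP Su /asboolP Sv; apply/asboolP; apply: SD.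
by move=> a u /asboolP Su; apply/asboolP; rewrite -[_ *: _]addr0; apply: SL.
Qed.

HB.instance Definition _ :=
  GRing.isSubmodClosed.Build k V subspace_pred subspace_pred_closed.
Definition subspace := {x : V | x \in subspace_pred}.
HB.instance Definition _ := [isSub of subspace for @sval V (fun x => x \in subspace_pred)].
HB.instance Definition _ := [Choice of subspace by <:].
HB.instance Definition _ := [SubChoice_isSubLmodule of subspace by <:].

(* The lmodType instance depends on S0 and SL, which cannot be inferred from
   [subspace S] alone, hence this packaging. *)
Definition subspace_lmod : lmodType k := subspace.

Lemma subspaceP (u : subspace) : S (val u).
Proof. exact: asboolW (valP u). Qed.
End SubLmodule.

Section SubPersistenceModules.
Variables (R : realType) (n : nat) (k : fieldType).
Local Notation pt := 'rV[R]_n.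
Variables (M : pmod R n k) (pM : is_pmod M).

Definition subfam := fam (fun p : pt => pV M p).

Definition is_subpmod (L : subfam) :=
  [/\ forall p, L p 0,
      forall p a (u v : pV M p), L p u -> L p v -> L p (a *: u + v) &
      forall p q, ple p q -> forall u : pV M p, L p u -> L q (pm M p q u)].

Definition closed_subfam (L : subfam) :=
  forall p v, (forall x, pll p x -> L x (pm M p x v)) -> L p v.

Section SubpmodFacts.
Variables (L : subfam) (hL : is_subpmod L).
Arguments L : clear implicits.

Lemma sub0 p : L p 0. Proof. by case: hL. Qed.
Lemma subL p a (u v : pV M p) : L p u -> L p v -> L p (a *: u + v).
Proof. by case: hL => _ hl _; apply: hl. Qed.
Lemma subM p q (u : pV M p) : ple p q -> L p u -> L q (pm M p q u).
Proof. by case: hL => _ _ hm h; exact: (hm p q h u). Qed.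
Lemma subZ p a (u : pV M p) : L p u -> L p (a *: u).
Proof. by move=> hu; have := subL a hu (sub0 p); rewrite addr0. Qed.
Lemma subD p (u v : pV M p) : L p u -> L p v -> L p (u + v).
Proof. by move=> hu hv; have := subL 1 hu hv; rewrite scale1r. Qed.
Lemma subB p (u v : pV M p) : L p u -> L p v -> L p (u - v).
Proof. by move=> hu hv; apply: subD hu _; rewrite -scaleN1r; apply: subZ. Qed.

Definition subpmod_fibre p : lmodType k := subspace_lmod (sub0 p) (@subL p).

Definition subpmod_map p q (u : subpmod_fibre p) : subpmod_fibre q :=
  if pselect (ple p q) is left h
  then exist _ (pm M p q (val u)) (asboolT (subM h (subspaceP u))) else 0.

Definition subpmod : pmod R n k := PMod subpmod_map.

Lemma subpmod_mapE p q (u : subpmod_fibre p) :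
  ple p q -> val (subpmod_map q u) = pm M p q (val u).
Proof. by move=> h; rewrite /subpmod_map; case: pselect. Qed.

Lemma subpmod_is_pmod : is_pmod subpmod.
Proof.
have [Ml Mid Mc] := pM; split=> [p q h a u v|p v|p q r h1 h2 v]; apply: val_inj.
- by rewrite /= !subpmod_mapE //= Ml.
- by rewrite /= subpmod_mapE ?Mid //; apply: ple_refl.
by rewrite /= !subpmod_mapE //; [apply: Mc|apply: ple_trans h1 h2].
Qed.

Lemma subpmod_usc : usc M -> closed_subfam L -> usc subpmod.
Proof.
move=> uM Lc p m hm.
have hm' x y : pll p x -> ple x y -> pm M x y (val (m x)) = val (m y).
  by move=> px hxy; rewrite -(hm x y px hxy) /= subpmod_mapE.
have [[v hv] uniq] := uM p (fun x => val (m x)) hm'.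
have Lv : L p v by apply: Lc => x px; rewrite hv //; apply: subspaceP.
split.
  exists (exist _ v (asboolT Lv)) => x px; apply: val_inj.
  by rewrite /= subpmod_mapE ?hv //; apply: pll_ple.
move=> a b ha hb; apply: val_inj; apply: uniq => x px.
  by rewrite -(ha x px) /= subpmod_mapE //; apply: pll_ple.
by rewrite -(hb x px) /= subpmod_mapE //; apply: pll_ple.
Qed.

Definition subpmod_incl : Defs.hom subpmod M := fun p u => val u.

Lemma subpmod_incl_hom : is_hom subpmod_incl.
Proof. by split => // p q h v; rewrite /subpmod_incl /= subpmod_mapE. Qed.

Lemma subpmod_incl_mono : mono subpmod_incl.
Proof. by apply: mono_of_inj => p u w; apply: val_inj. Qed.
End SubpmodFacts.

Section Kernels.
Variables (N : pmod R n k) (pN : is_pmod N) (phi : Defs.hom M N) (hphi : is_hom phi).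
Arguments phi : clear implicits.

Lemma kernel_subpmod : is_subpmod (fun p u => phi p u = 0).
Proof.
have [Nl _ _] := pN; have [pl pn] := hphi.
split=> [p|p a u v|p q h u]; first exact: lin0 (pl p).
  by rewrite pl => -> ->; rewrite scaler0 addr0.
by rewrite pn // => ->; apply: lin0 (Nl _ _ h).
Qed.

Lemma kernel_closed : usc N -> closed_subfam (fun p u => phi p u = 0).
Proof.
have [Nl _ _] := pN; move=> uN p v h; apply: (usc_eq pN uN) => x px.
by rewrite -(hphi.2 _ _ (pll_ple px)) h // (lin0 (Nl _ _ (pll_ple px))).
Qed.
End Kernels.
End SubPersistenceModules.
Arguments subpmod_incl {R n k M L} hL p u.

Section IdempotentSplitting.
Variables (R : realType) (n : nat) (k : fieldType).

(* An idempotent e splits M as ker (e - 1) (+) ker e; both are closed, so the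
   summands are again objects of the category. *)
Lemma idempotent_trivial_of_indecomposable (M : pmod R n k) :
  obj M -> indecomposable M -> idempotent_trivial M.
Proof.
move=> [pM uM] [_ Mind] e he ee; have [el en] := he; have [Ml _ _] := pM.
have ee' p (u : pV M p) : e p (e p u) = e p u := ee p u.
pose e1 : Defs.hom M M := fun p u => e p u - u.
have he1 : is_hom e1.
  split=> [p a u v|p q h u]; first by rewrite /e1 el scalerBr addrACA opprD.
  by rewrite /e1 en // (linB (Ml _ _ h)).
pose M1 := subpmod (kernel_subpmod pM he1); pose M2 := subpmod (kernel_subpmod pM he).
have o1 : obj M1.
  by split; [apply: subpmod_is_pmod|apply: subpmod_usc => //; apply: kernel_closed].
have o2 : obj M2.
  by split; [apply: subpmod_is_pmod|apply: subpmod_usc => //; apply: kernel_closed].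
have in1 p (u : pV M p) : e1 p (e p u) = 0 by rewrite /e1 ee' subrr.
have in2 p (u : pV M p) : e p (u - e p u) = 0 by rewrite (linB (el p)) ee' subrr.
pose p1 : Defs.hom M M1 := fun p u => exist _ (e p u) (asboolT (in1 p u)).
pose p2 : Defs.hom M M2 := fun p u => exist _ (u - e p u) (asboolT (in2 p u)).
have fix1 p (w : pV M1 p) : e p (val w) = val w.
  by apply/eqP; rewrite -subr_eq0; apply/eqP; apply: (subspaceP w).
have ker2 p (w : pV M2 p) : e p (val w) = 0 := subspaceP w.
have [|A0|B0] := Mind M1 M2 o1 o2.
- exists (subpmod_incl (kernel_subpmod pM he1)), (subpmod_incl (kernel_subpmod pM he)), p1, p2.
  split; first split.
  + exact: subpmod_incl_hom.
  + exact: subpmod_incl_hom.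
  + split=> [p a u v|p q h v]; apply: val_inj; first by rewrite /= el.
    by rewrite /= subpmod_mapE //= en.
  + split=> [p a u v|p q h v]; apply: val_inj.
      by rewrite /= el scalerBr opprD addrACA.
    by rewrite /= subpmod_mapE //= (linB (Ml _ _ h)) en.
  split=> p u; rewrite /hcomp /subpmod_incl /hadd /hid /hzero; try apply: val_inj => /=.
  + exact: fix1.
  + by rewrite ker2 subr0.
  + exact: ker2.
  + by rewrite fix1 subrr.
  + by rewrite addrC subrK.
- by left => p u; have /(congr1 val) := A0 p (p1 p u).
by right => p u; have /(congr1 val) /eqP := B0 p (p2 p u); rewrite subr_eq0 => /eqP.
Qed.
End IdempotentSplitting.

Section SubFamilies.
Variables (R : realType) (n : nat) (k : fieldType).
Local Notation pt := 'rV[R]_n.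
Variables (M : pmod R n k) (pM : is_pmod M).
Implicit Types (L : subfam M) (p q : pt).

Definition cyc p0 (x : pV M p0) : subfam M := fun q w =>
  w = 0 \/ (ple p0 q /\ exists c, w = c *: pm M p0 q x).
Arguments cyc {p0} x _ _.

Definition fsum L1 L2 : subfam M := fun p u => exists e d, [/\ L1 p e, L2 p d & u = e + d].
Arguments fsum L1 L2 _ _.

Definition disj L1 L2 := forall p u, L1 p u -> L2 p u -> u = 0.

Definition cl L : subfam M := fun p v => forall x, pll p x -> L x (pm M p x v).
Arguments cl L _ _.

Lemma cyc_self p0 (x : pV M p0) : cyc x p0 x.
Proof.
have [_ Mid _] := pM; right; split; first exact: ple_refl.
by exists 1; rewrite scale1r Mid.
Qed.

Lemma cyc_subpmod p0 (x : pV M p0) : is_subpmod (cyc x).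
Proof.
have [Ml _ Mc] := pM.
have cE q w : ple p0 q -> cyc x q w -> exists c, w = c *: pm M p0 q x.
  by move=> h [->|[_ //]]; exists 0; rewrite scale0r.
split=> [p|q a u v hu hv|q r hqr u]; first by left.
  have [hq|nq] := pselect (ple p0 q); last first.
    by case: hu => [->|[//]]; case: hv => [->|[//]]; left; rewrite scaler0 addr0.
  have [c1 ->] := cE _ _ hq hu; have [c2 ->] := cE _ _ hq hv.
  by right; split => //; exists (a * c1 + c2); rewrite scalerA scalerDl.
case=> [->|[hq [c ->]]]; first by left; rewrite (lin0 (Ml _ _ hqr)).
right; split; first exact: ple_trans hq hqr.
by exists c; rewrite (linZ (Ml _ _ hqr)) -Mc.
Qed.

Lemma fsum_subpmod L1 L2 : is_subpmod L1 -> is_subpmod L2 -> is_subpmod (fsum L1 L2).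
Proof.
move=> h1 h2; have [Ml _ _] := pM.
split=> [p|p a u v [e1 [d1 [E1 D1 ->]]] [e2 [d2 [E2 D2 ->]]]|p q h u [e [d [E1 D1 ->]]]].
- by exists 0, 0; rewrite addr0; split => //; apply: sub0.
- exists (a *: e1 + e2), (a *: d1 + d2); split; [exact: subL|exact: subL|].
  by rewrite scalerDr addrACA.
exists (pm M p q e), (pm M p q d); split; [exact: subM|exact: subM|].
by rewrite (linD (Ml _ _ h)).
Qed.

Lemma fsub_fsum_l L1 L2 : is_subpmod L2 -> fsub L1 (fsum L1 L2).
Proof. by move=> h2 p u hu; exists u, 0; rewrite addr0; split => //; apply: sub0. Qed.

Lemma fsub_fsum_r L1 L2 : is_subpmod L1 -> fsub L2 (fsum L1 L2).
Proof. by move=> h1 p u hu; exists 0, u; rewrite add0r; split => //; apply: sub0. Qed.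

Lemma cl_subpmod L : is_subpmod L -> is_subpmod (cl L).
Proof.
move=> hL; have [Ml _ Mc] := pM.
split=> [p x px|p a u v hu hv x px|p q hpq u hu x qx].
- by rewrite (lin0 (Ml _ _ (pll_ple px))); apply: sub0.
- by rewrite (Ml _ _ (pll_ple px)); exact (subL hL a (hu x px) (hv x px)).
by rewrite -Mc //; [apply: (hu x); apply: ple_pll_trans hpq qx|apply: pll_ple].
Qed.

Lemma fsub_cl L : is_subpmod L -> fsub L (cl L).
Proof. by move=> hL p u hu x px; apply: subM => //; apply: pll_ple. Qed.

Lemma funion_subpmod (C : set (subfam M)) : C `<=` @is_subpmod _ _ _ M -> (exists L, C L) ->
  (forall L1 L2, C L1 -> C L2 -> fsub L1 L2 \/ fsub L2 L1) -> is_subpmod (funion C).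
Proof.
move=> CS [L0 CL0] tot; split=> [p|p a u v [L1 C1 h1] [L2 C2 h2]|p q h u [L CL hu]].
- by exists L0 => //; exact (sub0 (CS _ CL0) p).
- have [s12|s21] := tot L1 L2 C1 C2.
    by exists L2 => //; exact (subL (CS _ C2) a (s12 _ _ h1) h2).
  by exists L1 => //; exact (subL (CS _ C1) a h1 (s21 _ _ h2)).
by exists L => //; exact (subM (CS _ CL) h hu).
Qed.

Definition meets (N : subfam M) p (u : pV M p) :=
  exists q c, [/\ ple p q, c *: pm M p q u != 0 & N q (c *: pm M p q u)].

Lemma meets_scale (N : subfam M) p q (u : pV M p) c :
  ple p q -> meets N (c *: pm M p q u) -> meets N u.
Proof.
move=> hpq [r [c' [hqr nz hN]]]; have [Ml _ Mc] := pM.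
rewrite (linZ (Ml _ _ hqr)) -Mc // scalerA in nz hN.
by exists r, (c' * c); split => //; apply: ple_trans hpq hqr.
Qed.
End SubFamilies.
Arguments cyc {R n k M p0} x _ _.
Arguments cl {R n k M} L _ _.
Arguments fsum {R n k M} L1 L2 _ _.

Section Uniformity.
Variables (R : realType) (n : nat) (k : fieldType).
Local Notation pt := 'rV[R]_n.
Variables (M : pmod R n k) (pM : is_pmod M) (uM : usc M).
Arguments uM : clear implicits.
Hypotheses (injM : injective_obj M) (indM : indecomposable M).
Variables (p1 : pt) (a : pV M p1) (p2 : pt) (b : pV M p2).
Hypotheses (a0 : a != 0) (b0 : b != 0) (ab_disj : disj (cyc a) (cyc b)).
Implicit Types (L : subfam M) (p q : pt).

Definition essential_ext L :=
  [/\ is_subpmod L, fsub (cyc a) L & forall p (u : pV M p), L p u -> u != 0 -> meets (cyc a) u].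

Lemma exists_max_essential_ext :
  exists2 E, essential_ext E & forall L, essential_ext L -> fsub E L -> fsub L E.
Proof.
apply: (zorn_fam (L0 := cyc a)).
  split; [exact: cyc_subpmod|by []|] => p u hu nz; have [_ Mid _] := pM.
  by exists p, 1; rewrite scale1r Mid; split => //; apply: ple_refl.
move=> C CE [L0 CL0] tot; split.
- by apply: funion_subpmod => // [L /CE []|]; last by exists L0.
- by move=> p u hu; exists L0 => //; have [_ h _] := CE _ CL0; apply: h.
by move=> p u [L CL hu] nz; have [_ _ h] := CE _ CL; apply: h.
Qed.

Section MaxEssential.
Variable E : subfam M.
Arguments E : clear implicits.
Hypotheses (EE : essential_ext E) (Emax : forall L, essential_ext L -> fsub E L -> fsub L E).

Let sE : is_subpmod E. Proof. by case: EE. Qed.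

Lemma essential_closed : fsub (cl E) E.
Proof.
have [_ aE _] := EE; apply: Emax; last exact: fsub_cl.
split; [exact: cl_subpmod|by move=> p u /aE; apply: fsub_cl|].
move=> p v hv nz; have [x px nzx] := usc_nz pM uM nz.
have [_ _ h] := EE; have := h _ _ (hv x px) nzx.
by rewrite -[pm M p x v]scale1r => /(meets_scale pM (pll_ple px)).
Qed.

Lemma essential_disj_cyc_b : disj E (cyc b).
Proof.
move=> p u hE hN; apply: contrapT => /eqP nz.
have [_ _ h] := EE; have [q [c [hpq nz2 hN1]]] := h _ _ hE nz.
have hN2 : cyc b q (c *: pm M p q u).
  have hb := cyc_subpmod pM b; exact (subZ hb c (subM hb hpq hN)).
by move/eqP: nz2; apply; apply: ab_disj.
Qed.

Definition complement L := [/\ is_subpmod L, fsub (cyc b) L & disj L E].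

Lemma exists_max_complement :
  exists2 K, complement K & forall L, complement L -> fsub K L -> fsub L K.
Proof.
apply: (zorn_fam (L0 := cyc b)).
  split; [exact: cyc_subpmod|by []|] => p u h1 h2.
  exact: essential_disj_cyc_b.
move=> C CK [L0 CL0] tot; split.
- by apply: funion_subpmod => // [L /CK []|]; last by exists L0.
- by move=> p u hu; exists L0 => //; have [_ h _] := CK _ CL0; apply: h.
by move=> p u [L CL hu] hE; have [_ _ h] := CK _ CL; apply: h.
Qed.

Section MaxComplement.
Variable K : subfam M.
Arguments K : clear implicits.
Hypotheses (KK : complement K) (Kmax : forall L, complement L -> fsub K L -> fsub L K).
Arguments Kmax : clear implicits.

Let sK : is_subpmod K. Proof. by case: KK. Qed.
Let KE : disj K E. Proof. by case: KK. Qed.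

Lemma complement_closed : fsub (cl K) K.
Proof.
have [_ bK _] := KK; apply: Kmax; last exact: fsub_cl.
split; [exact: cl_subpmod|by move=> p u /bK; apply: fsub_cl|].
move=> p v hv hE; apply: (usc_eq pM uM) => x px; have [Ml _ _] := pM.
rewrite (lin0 (Ml _ _ (pll_ple px))); apply: KE; first exact: hv.
exact (subM sE (pll_ple px) hE).
Qed.

Local Notation EK := (fsum E K).

Lemma EK_decomp_uniq p (e1 e2 d1 d2 : pV M p) : E p e1 -> E p e2 -> K p d1 -> K p d2 ->
  e1 + d1 = e2 + d2 -> e1 = e2.
Proof.
move=> E1 E2 D1 D2 h; apply/eqP; rewrite -subr_eq0; apply/eqP; apply: KE.
  suff -> : e1 - e2 = d2 - d1 by apply: subB.
  by apply/eqP; rewrite subr_eq addrC addrA -h addrK.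
exact: subB.
Qed.

Definition proj_E p (u : pV M p) : pV M p :=
  if pselect (EK p u) is left h then projT1 (cid h) else 0.

Lemma proj_EP p (u : pV M p) : EK p u -> E p (proj_E u) /\ K p (u - proj_E u).
Proof.
move=> h; rewrite /proj_E; case: pselect => [h'|//].
by case: (cid h') => e /= [d [Ee Kd ->]]; rewrite addrC addKr.
Qed.

Lemma proj_EE p (e d : pV M p) : E p e -> K p d -> proj_E (e + d) = e.
Proof.
move=> Ee Kd; have [h1 h2] := proj_EP (ex_intro _ e (ex_intro _ d (And3 Ee Kd erefl))).
by apply: EK_decomp_uniq h1 Ee h2 Kd _; rewrite addrC subrK.
Qed.

Lemma proj_E_pmap p q (u : pV M p) :
  ple p q -> EK p u -> proj_E (pm M p q u) = pm M p q (proj_E u).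
Proof.
move=> h Su; have [h1 h2] := proj_EP Su; have [Ml _ _] := pM.
rewrite -[u in pm M p q u](subrK (proj_E u)) (linD (Ml _ _ h)) addrC.
by rewrite proj_EE //; [exact (subM sE h h1)|exact (subM sK h h2)].
Qed.

Lemma proj_E_lin p c (u v : pV M p) :
  EK p u -> EK p v -> proj_E (c *: u + v) = c *: proj_E u + proj_E v.
Proof.
move=> Su Sv; have [e1 d1] := proj_EP Su; have [e2 d2] := proj_EP Sv.
rewrite -[u in c *: u](subrK (proj_E u)) -[v in _ + v](subrK (proj_E v)).
rewrite [_ + proj_E u]addrC [_ + proj_E v]addrC scalerDr addrACA.
by rewrite proj_EE //; apply: subL.
Qed.

Lemma EK_closed : closed_subfam EK.
Proof.
move=> p v hv; have [Ml _ Mc] := pM.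
pose m x := proj_E (pm M p x v).
have hm x y : pll p x -> ple x y -> pm M x y (m x) = m y.
  by move=> px hxy; rewrite /m -(proj_E_pmap hxy (hv x px)) -Mc //; apply: pll_ple.
have [[e he] _] := uM p m hm.
have Ee : E p e.
  by apply: essential_closed => x px; rewrite he //; case: (proj_EP (hv x px)).
have Kd : K p (v - e).
  apply: complement_closed => x px; rewrite (linB (Ml _ _ (pll_ple px))) he //.
  by case: (proj_EP (hv x px)).
by exists e, (v - e); split => //; rewrite addrC subrK.
Qed.

(* Injectivity of M extends the projection of E (+) K onto E to all of M. *)
Lemma exists_retraction : exists2 psi : Defs.hom M M, is_hom psi &
  forall p (e d : pV M p), E p e -> K p d -> psi p (e + d) = e.
Proof.
have sEK := fsum_subpmod pM sE sK.
have oEK : obj (subpmod sEK).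
  by split; [apply: subpmod_is_pmod|apply: subpmod_usc => //; apply: EK_closed].
pose gS : Defs.hom (subpmod sEK) M := fun p u => proj_E (val u).
have gS_hom : is_hom gS.
  split=> [p c u v|p q h u]; first by rewrite /gS /= proj_E_lin //; apply: subspaceP.
  by rewrite /gS subpmod_mapE // proj_E_pmap //; apply: subspaceP.
have [psi [hpsi psi_ext]] :=
  injM oEK (conj pM uM) (subpmod_incl_hom sEK) (subpmod_incl_mono (hL := sEK)) gS_hom.
exists psi => // p e d Ee Kd; have EKed : EK p (e + d) by exists e, d.
have := psi_ext p (exist _ (e + d) (asboolT EKed)).
by rewrite /hcomp /subpmod_incl /gS /= => ->; rewrite proj_EE.
Qed.

Section Retraction.
Variables (psi : Defs.hom M M) (hpsi : is_hom psi).
Arguments psi : clear implicits.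
Hypothesis psiE : forall p (e d : pV M p), E p e -> K p d -> psi p (e + d) = e.

Let psi_E p (e : pV M p) : E p e -> psi p e = e.
Proof. by move=> Ee; have := psiE Ee (sub0 sK p); rewrite addr0. Qed.

Let psi_K p (d : pV M p) : K p d -> psi p d = 0.
Proof. by move=> Kd; have := psiE (sub0 sE p) Kd; rewrite add0r. Qed.

(* Otherwise K + <x> would be a larger complement of E, forcing x into K. *)
Lemma retraction_meets_E p (x : pV M p) : psi p x != 0 -> meets E (psi p x).
Proof.
move=> nz; apply: contrapT => nmeet; have [pl pn] := hpsi; have [_ bK _] := KK.
have hx := cyc_subpmod pM x.
have Kx : complement (fsum K (cyc x)).
  split; [exact: fsum_subpmod|by move=> q w /bK; apply: fsub_fsum_l|].
  move=> q w [d [z [Kd Cz ->]]] Ew.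
  have psiw : psi q (d + z) = d + z := psi_E Ew.
  rewrite (linD (pl q)) psi_K // add0r in psiw.
  case: Cz psiw Ew => [->|[hpq [c ->]]]; first by rewrite (lin0 (pl q)) addr0 => <-.
  rewrite (linZ (pl q)) pn // => <- Ew; apply: contrapT => /eqP nz2; apply: nmeet.
  by exists q, c.
have Kx_x : fsum K (cyc x) p x := fsub_fsum_r sK (cyc_self pM x).
by move: nz; rewrite psi_K ?eqxx //; exact (Kmax _ Kx (fsub_fsum_l hx) _ _ Kx_x).
Qed.

(* The image of psi is an essential extension of <a> containing E, so the
   maximality of E applies. *)
Lemma retraction_image_sub_E : fsub (fun p u => exists w, u = psi p w) E.
Proof.
have [pl pn] := hpsi; have [_ aE ess] := EE.
apply: Emax; last by move=> p u Eu; exists u; rewrite psi_E.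
split.
- split=> [p|p c u v [x ->] [y ->]|p q h u [x ->]]; first by exists 0; rewrite (lin0 (pl p)).
    by exists (c *: x + y); rewrite pl.
  by exists (pm M p q x); rewrite pn.
- by move=> p u /aE Eu; exists u; rewrite psi_E.
move=> p u [x ->] nz; have [q [c [hpq nz2 Eq]]] := retraction_meets_E nz.
exact (meets_scale pM hpq (ess _ _ Eq nz2)).
Qed.

Lemma retraction_idempotent : heq (hcomp psi psi) psi.
Proof. by move=> p x; rewrite /hcomp psi_E //; apply: retraction_image_sub_E; exists x. Qed.

Lemma retraction_absurd : False.
Proof.
have [_ aE _] := EE; have [_ bK _] := KK.
have [h0|h1] := idempotent_trivial_of_indecomposable (conj pM uM) indM hpsi retraction_idempotent.
  by move: (h0 p1 a); rewrite psi_E; [apply/eqP|exact: aE (cyc_self pM a)].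
by move: (h1 p2 b); rewrite psi_K; [move/esym; apply/eqP|exact: bK (cyc_self pM b)].
Qed.
End Retraction.
End MaxComplement.
End MaxEssential.

Lemma disj_cyclic_absurd : False.
Proof.
have [E EE Emax] := exists_max_essential_ext.
have [K KK Kmax] := exists_max_complement EE.
have [psi hpsi psiE] := exists_retraction EE Emax KK Kmax.
exact (retraction_absurd EE Emax KK Kmax hpsi psiE).
Qed.
End Uniformity.

Lemma indec_injective_cyclic_meet (R : realType) (n : nat) (k : fieldType) (M : pmod R n k) :
  obj M -> injective_obj M -> indecomposable M ->
  forall p1 (a : pV M p1) p2 (b : pV M p2), a != 0 -> b != 0 -> ~ disj (cyc a) (cyc b).
Proof. by move=> [pM uM] injM indM p1 a p2 b a0 b0; apply: disj_cyclic_absurd. Qed.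

Lemma iso_of_section (R : realType) (n : nat) (k : fieldType) (M N : pmod R n k)
    (G : Defs.hom M N) (H : Defs.hom N M) :
  is_hom G -> is_hom H -> heq (hcomp G H) (@hid _ _ _ N) -> idempotent_trivial M ->
  ~ heq (hcomp H G) (@hzero _ _ _ M M) -> iso M N.
Proof.
move=> hG hH GH idM HG0.
have idem : heq (hcomp (hcomp H G) (hcomp H G)) (hcomp H G).
  by move=> p u; rewrite /hcomp [G p (H p _)]GH.
have [//|HG1] := idM _ (hcomp_hom hG hH) idem.
by exists G, H; split.
Qed.

Section SupportDownset.
Variables (R : realType) (n : nat) (k : fieldType).
Local Notation pt := 'rV[R]_n.
Variables (M : pmod R n k) (oM : obj M) (injM : injective_obj M) (indM : indecomposable M).
Variables (p0 : pt) (v : pV M p0) (v0 : v != 0).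

Let vat q : pV M q := pm M p0 q v.

Let vat_pmap q r : ple p0 q -> ple q r -> pm M q r (vat q) = vat r.
Proof. by move=> h1 h2; have [[_ _ Mc] _] := oM; rewrite /vat -Mc. Qed.

Definition vsupp : set pt := [set q | ple p0 q /\ vat q != 0].
Definition vdown : set pt := [set y | exists2 x, vsupp x & pll y x].

Lemma vsupp_p0 : vsupp p0.
Proof. by have [[_ Mid _] _] := oM; split; [apply: ple_refl|rewrite /vat Mid]. Qed.

(* Uniformity: the cyclic submodules generated by v_q1 and v_q2 meet. *)
Lemma vsupp_directed q1 q2 : vsupp q1 -> vsupp q2 -> exists r, [/\ vsupp r, ple q1 r & ple q2 r].
Proof.
move=> [h1 n1] [h2 n2]; apply: contrapT => nex.
apply: (indec_injective_cyclic_meet oM injM indM n1 n2) => r u c1 c2.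
apply: contrapT => /eqP nu.
case: c1 => [u0|[hr1 [a1 ua]]]; first by move: nu; rewrite u0 eqxx.
case: c2 => [u0|[hr2 _]]; first by move: nu; rewrite u0 eqxx.
apply: nex; exists r; split => //; split; first exact: ple_trans h1 hr1.
by apply: contraNneq nu => vr0; rewrite ua (vat_pmap h1 hr1) vr0 scaler0.
Qed.

Lemma vdown_open : open vdown.
Proof.
rewrite openE => y [x Sx yx]; have := @open_pll _ _ x; rewrite openE => /(_ y yx).
by apply: filterS => z zx; exists x.
Qed.

Lemma vdown_downset : downset vdown.
Proof. by move=> y z [x Sx yx] zy; exists x => //; apply: ple_pll_trans zy yx. Qed.

Lemma vdown_updirected : updirected vdown.
Proof.
split.
  exists (shift p0 (-1)), p0; first exact: vsupp_p0.
  by move=> i; rewrite mxE gtrDl ltrN10.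
move=> y1 y2 [x1 S1 h1] [x2 S2 h2]; have [z [Sz hz1 hz2]] := vsupp_directed S1 S2.
exists (pmax y1 y2); split; [|exact: pmax_l|exact: pmax_r].
exists z => // i; rewrite mxE gt_max.
by rewrite (lt_le_trans (h1 i) (hz1 i)) (lt_le_trans (h2 i) (hz2 i)).
Qed.

Lemma vsupp_vdown q : vsupp q -> vdown q.
Proof.
move=> [hq nz]; have [pM uM] := oM; have [x qx nzx] := usc_nz pM uM nz.
by exists x => //; split; [apply: ple_trans hq (pll_ple qx)|rewrite -(vat_pmap hq (pll_ple qx))].
Qed.

Lemma vdown_vsupp q : ple p0 q -> vdown q -> vsupp q.
Proof.
move=> hq [x [hx nzx] qx]; split => //; have [[Ml _ _] _] := oM.
apply: contraNneq nzx => vq0.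
by rewrite -(vat_pmap hq (pll_ple qx)) vq0 (lin0 (Ml _ _ (pll_ple qx))).
Qed.

Local Notation T := [set q | ple p0 q /\ vdown q].

Definition vgen : Defs.hom (indicator k T) M := fun q c => row_sum c *: vat q.
Definition vincl : Defs.hom (indicator k T) (indicator k vdown) := fun q c => const_mx (row_sum c).

Lemma vgen_hom : is_hom vgen.
Proof.
have [[Ml _ _] _] := oM.
split=> [q a c d|q r hqr c]; first by rewrite /vgen row_sum_lin scalerDl scalerA.
rewrite /vgen indicator_pmapE row_sum_const.
have [Tq|nTq] := pselect (T q); last first.
  by rewrite (row_sumF c (asboolF nTq)) if_same !scale0r (lin0 (Ml _ _ hqr)).
have [hpq Dq] := Tq; have hpr := ple_trans hpq hqr.
rewrite (linZ (Ml _ _ hqr)) vat_pmap //.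
have [Tr|nTr] := pselect (T r); first by rewrite (asboolT Tr).
rewrite (asboolF nTr) scale0r; suff -> : vat r = 0 by rewrite scaler0.
have [//|vr] := eqVneq (vat r) 0; case: nTr; split => //; exact: vsupp_vdown.
Qed.

Lemma vincl_hom : is_hom vincl.
Proof.
split=> [q a c d|q r hqr c]; first by rewrite /vincl row_sum_lin const_mx_lin.
rewrite /vincl !indicator_pmapE !row_sum_const.
have [[hq Dq]|nTq] := pselect (T q); last by rewrite (row_sumF c (asboolF nTq)) !if_same.
rewrite (asboolT Dq); have [Dr|nDr] := pselect (vdown r); last exact/rowF_eq/asboolF.
by rewrite (asboolT (conj (ple_trans hq hqr) Dr)).
Qed.

Lemma vgen_mono : mono vgen.
Proof.
apply: mono_of_inj => q c d; rewrite /vgen.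
have [[hq Dq]|nTq] := pselect (T q); last by move=> _; apply/rowF_eq/asboolF.
have [_ nz] := vdown_vsupp hq Dq.
move=> /eqP; rewrite -subr_eq0 -scalerBl scaler_eq0 (negbTE nz) orbF subr_eq0.
by move=> /eqP; apply: row_sum_inj.
Qed.

Lemma vincl_mono : mono vincl.
Proof.
apply: mono_of_inj => q c d; rewrite /vincl.
have [[_ Dq]|nTq] := pselect (T q); last by move=> _; apply/rowF_eq/asboolF.
by move=> /(congr1 (@row_sum _ _)); rewrite !row_sum_constT ?(asboolT Dq) //; apply: row_sum_inj.
Qed.

(* Extend vincl along vgen (k[vdown] is injective) and vgen along vincl (M is
   injective); the composite on k[vdown] is a scalar, equal to 1 at p0. *)
Lemma vdown_iso : iso M (indicator k vdown).
Proof.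
have oT : obj (indicator k T) := indicator_upcap_obj k p0 vdown_open vdown_downset.
have oD : obj (indicator k vdown) := indicator_downset_obj k vdown_open vdown_downset.
have [G [hG eG]] :=
  indicator_injective vdown_downset vdown_updirected oT oM vgen_hom vgen_mono vincl_hom.
have [H [hH eH]] := injM oT oD vincl_hom vincl_mono vgen_hom.
have [c hc] := indicator_endo_scalar vdown_updirected (hcomp_hom hH hG).
have Tp0 : T p0 by split; [apply: ple_refl|apply: vsupp_vdown; apply: vsupp_p0].
have GHv : G p0 (H p0 (@vincl p0 (const_mx 1))) = @vincl p0 (const_mx 1).
  by rewrite [H p0 _]eH [G p0 _]eG.
have c1 : c = 1.
  move: GHv; rewrite [LHS]hc /vincl row_sum_constT ?(asboolT Tp0) // -const_mx_scale.
  by move=> /(congr1 (@row_sum _ _)); rewrite !row_sum_constT ?(asboolT Tp0.2) // mulr1.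
apply: (iso_of_section hG hH) => [p u||].
- by have := hc p u; rewrite c1 scale1r.
- exact: idempotent_trivial_of_indecomposable.
move=> HG0; move/eqP: v0; apply; have := HG0 p0 v; rewrite /hcomp.
have <- : @vgen p0 (const_mx 1) = v.
  have [[_ Mid _] _] := oM.
  by rewrite /vgen row_sum_constT ?(asboolT Tp0) // scale1r /vat Mid.
by rewrite [G p0 _]eG [H p0 _]eH.
Qed.
End SupportDownset.

Theorem mainTheorem17 (R : realType) (n : nat) (k : fieldType) :
  (forall D : set 'rV[R]_n,
     updirected D -> downset D -> open D -> indec_injective (indicator k D)) /\
  (forall M : pmod R n k, indec_injective M ->
     exists D : set 'rV[R]_n,
       [/\ updirected D, downset D, open D & iso M (indicator k D)]) /\
  (forall D1 D2 : set 'rV[R]_n,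
     updirected D1 -> downset D1 -> open D1 ->
     updirected D2 -> downset D2 -> open D2 ->
     iso (indicator k D1) (indicator k D2) -> D1 = D2).
Proof.
split.
  move=> D uD dD oD; split.
  - exact: indicator_downset_obj.
  - exact: indicator_injective.
  - exact: indicator_indecomposable.
split; last by move=> D1 D2 _ _ _ _ _ _; apply: indicator_iso_eq.
move=> M [oM injM indM]; have [nz _] := indM.
have [p0 [v v0]] : exists p0 (v : pV M p0), v != 0.
  apply: contrapT => h; apply: nz => p v; apply: contrapT => /eqP v0.
  by apply: h; exists p, v.
exists (vdown v); split.
- exact: vdown_updirected.
- exact: vdown_downset.
- exact: vdown_open.
exact: vdown_iso.
Qed.
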